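(* For every $n\geq 1$: $\widehat{\left(\Sigma_n^0\text{-}\mathrm{LLPO}\right)}\leq_W\mathrm{Det}_{\mathfrak{D}_n}$ and $\left(\Sigma_n^0\text{-}\mathrm{LEM}\right)\leq_W\mathrm{Win}_{\mathfrak{D}_n}$.
   Context: $f\leq_W g$ (Weihrauch reducibility between partial multivalued maps on represented spaces) iff there are computable partial $K,H:\subseteq\mathbb{N}^\mathbb{N}\to\mathbb{N}^\mathbb{N}$ such that for every realizer $G$ of $g$, $p\mapsto K(\langle p,G(H(p))\rangle)$ is a realizer of $f$. $\widehat{f}(x_0,x_1,\ldots)=(f(x_0),f(x_1),\ldots)$. For $p\in\{0,1\}^\mathbb{N}$ let $\varphi_n(p)$ be the statement $\forall k_1\exists k_2\ldots\natural k_n\ p(\langle k_1,\ldots,k_n\rangle)=1$ (alternating quantifiers starting with $\forall$; $\natural=\forall$ if $n$ odd, $\exists$ if $n$ even; $\langle\cdot\rangle$ a computable tupling). $\Sigma^0_n\text{-}\mathrm{LEM}:\{0,1\}^\mathbb{N}\to\{0,1\}$ outputs $1$ iff $\varphi_n(p)$ holds. $\Sigma^0_n\text{-}\mathrm{LLPO}$ takes a pair $(p_0,p_1)$ for which $\varphi_n(p_0)$ or $\varphi_n(p_1)$ holds, and outputs any $i\in\{0,1\}$ with $\varphi_n(p_i)$. $\mathfrak{D}_n$ ($n$-th level of the difference hierarchy) consists of the sets $D\subseteq\{0,1\}^\mathbb{N}$ for which there are open $U_0,\ldots,U_{n-1}$ with $x\in D\iff \min\{\beta\mid x\in U_\beta\}\not\equiv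 n \pmod 2$ (where $\min\emptyset=n$); such $D$ is named by names of $U_0,\ldots,U_{n-1}$ (an open set being named by an enumeration of words $w$ with $U=\bigcup w\{0,1\}^\mathbb{N}$). Games: win/lose games with players 1,2, choices $\{0,1\}$, turn function $d:\{0,1\}^*\to\{1,2\}$ (lookup table), winning set for player 1, the rest won by player 2; a strategy is winning if all plays consistent with it are won. $\mathrm{Det}_\Gamma$: input such a game with player-1 winning set given by a $\Gamma$-name; output any strategy profile (function $\{0,1\}^*\to\{0,1\}$) in which one strategy is winning. $\mathrm{Win}_\Gamma$: same input, output the player having a winning strategy. *)

From mathcomp Require Import all_boot.
Set Implicit Arguments. Unset Strict Implicit. Unset Printing Implicit Defensive.

Inductive prf : Type :=
| PZero : prf
| PSucc : prf
| PProj : nat -> prf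
| PComp : prf -> list prf -> prf
| PPrec : prf -> prf -> prf
| PMu   : prf -> prf.

Inductive eval : prf -> seq nat -> nat -> Prop :=
| eZero args : eval PZero args 0
| eSucc args : eval PSucc args (head 0 args).+1
| eProj i args : eval (PProj i) args (nth 0 args i)
| eComp f gs args ys y :
    evals gs args ys -> eval f ys y -> eval (PComp f gs) args y
| ePrec0 f g args y : eval f args y -> eval (PPrec f g) (0 :: args) y
| ePrecS f g n args r y :
    eval (PPrec f g) (n :: args) r -> eval g (n :: r :: args) y ->
    eval (PPrec f g) (n.+1 :: args) y
| eMu f args n :
    eval f (n :: args) 0 ->
    (forall m, m < n -> exists2 y, y <> 0 & eval f (m :: args) y) ->
    eval (PMu f) args n
with evals : list prf -> seq nat -> seq nat -> Prop :=
| esNil args : evals nil args [::]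
| esCons g gs args y ys :
    eval g args y -> evals gs args ys -> evals (g :: gs) args (y :: ys).

Definition pair (a b : nat) : nat := (a + b) * (a + b).+1 %/ 2 + b.

Fixpoint seqcode (s : seq nat) : nat :=
  if s is x :: s' then (pair x (seqcode s')).+1 else 0.

Definition baire := nat -> nat.

Definition prefix (p : baire) (k : nat) : seq nat := mkseq p k.

(* The n-th output symbol is q n = m iff, for the least k such that the
   partial recursive function e returns a nonzero value on (n, p|k),
   that value is m+1 (all shorter prefixes returning 0 = "not yet"). *)
Definition computes (e : prf) (p q : baire) : Prop :=
  forall n, exists k,
    eval e [:: pair n (seqcode (prefix p k))] (q n).+1 /\
    forall j, j < k -> eval e [:: pair n (seqcode (prefix p j))] 0.

Definition pairB (p q : baire) : baire :=
  fun i => if odd i then q i./2 else p i./2.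

Record rep := Rep { carrier :> Type; names : baire -> carrier -> Prop }.

Record mvf (X Y : rep) := MVF {
  mdom : carrier X -> Prop;
  mrel : carrier X -> carrier Y -> Prop }.

Definition realizer (X Y : rep) (f : mvf X Y) (F : baire -> baire) : Prop :=
  forall p x, names p x -> mdom f x ->
    exists2 y, names (F p) y & mrel f x y.

(* f <=_W g, with K, H given by machines; K and H are partial (their
   domain is where the machine produces an infinite output), and the
   composition p |-> K<p, G(H p)> must be defined and realize f
   for every realizer G of g.  *)
Definition Wred (X Y X' Y' : rep) (f : mvf X Y) (g : mvf X' Y') : Prop :=
  exists (eK eH : prf), forall G : baire -> baire, realizer g G ->
    forall p x, names p x -> mdom f x ->
      exists q, computes eH p q /\ (exists2 z, names q z & mdom g z) /\
      exists r, computes eK (pairB p (G q)) r /\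
        exists2 y, names r y & mrel f x y.

Definition cantorR : rep :=
  @Rep (nat -> bool) (fun p x => forall i, p i = nat_of_bool (x i)).

Definition bitR : rep := @Rep bool (fun p b => p 0 = nat_of_bool b).

Definition prodR (X Y : rep) : rep :=
  @Rep (carrier X * carrier Y)
    (fun p xy => names (fun i => p i.*2) xy.1 /\ names (fun i => p i.*2.+1) xy.2).

Definition seqR (X : rep) : rep :=
  @Rep (nat -> carrier X)
    (fun p xs => forall i, names (fun j => p (pair i j)) (xs i)).

Definition hat (X Y : rep) (f : mvf X Y) : mvf (seqR X) (seqR Y) :=
  @MVF (seqR X) (seqR Y)
    (fun xs => forall i, mdom f (xs i))
    (fun xs ys => forall i, mrel f (xs i) (ys i)).

Fixpoint tuple (ks : seq nat) : nat :=
  match ks with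
  | [::] => 0
  | [:: k] => k
  | k :: ks' => pair k (tuple ks')
  end.

Fixpoint qalt (n : nat) (univ : bool) (P : seq nat -> Prop) : Prop :=
  match n with
  | 0 => P [::]
  | n'.+1 => if univ then forall k, qalt n' false (fun ks => P (k :: ks))
             else exists k, qalt n' true (fun ks => P (k :: ks))
  end.

Definition phi (n : nat) (p : nat -> bool) : Prop :=
  qalt n true (fun ks => p (tuple ks) = true).

Definition SigmaLEM (n : nat) : mvf cantorR bitR :=
  @MVF cantorR bitR (fun _ => True) (fun p b => b = true <-> phi n p).

Definition SigmaLLPO (n : nat) : mvf (prodR cantorR cantorR) bitR :=
  @MVF (prodR cantorR cantorR) bitR
    (fun pp => phi n pp.1 \/ phi n pp.2)
    (fun pp i => phi n (if i then pp.2 else pp.1)).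

Inductive player := P1 | P2.

Definition player_code (i : player) : nat := if i is P1 then 1 else 2.

Definition playerR : rep := @Rep player (fun p i => p 0 = player_code i).

Definition wcode (w : seq bool) : nat := seqcode (map nat_of_bool w).

Definition bprefix (x : nat -> bool) (k : nat) : seq bool := mkseq x k.

(* open set named by an enumeration of words: p i = (code w).+1 lists w,
   other values are ignored (allowing the empty set) *)
Definition open_of (p : baire) (x : nat -> bool) : Prop :=
  exists i w, p i = (wcode w).+1 /\ bprefix x (size w) = w.

(* x in D(U_0,...,U_{n-1}) iff min{beta | x in U_beta} (min empty = n)
   is not congruent to n mod 2 *)
Definition is_min_idx (n : nat) (U : nat -> (nat -> bool) -> Prop)
    (x : nat -> bool) (b : nat) : Prop :=
  b <= n /\ (b < n -> U b x) /\ (forall c, c < b -> ~ U c x).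

Definition diff_set (n : nat) (U : nat -> (nat -> bool) -> Prop)
    (x : nat -> bool) : Prop :=
  exists b, is_min_idx n U x b /\ odd b <> odd n.

(* a game: turn function and winning set for player 1 *)
Definition game := ((seq bool -> player) * ((nat -> bool) -> Prop))%type.

(* game with winning set given by a D_n-name:
   p = <p_d, p_W>, p_d a lookup table of d, p_W = <u_0,u_1,...> with
   u_beta (beta < n) names of the open sets U_beta *)
Definition gameR (n : nat) : rep :=
  @Rep game (fun p g =>
    (forall w, p (wcode w).*2 = player_code (g.1 w)) /\
    (forall x, g.2 x <->
       diff_set n (fun b => open_of (fun j => p (pair b j).*2.+1)) x)).

Definition profR : rep :=
  @Rep (seq bool -> bool) (fun p s => forall w, p (wcode w) = nat_of_bool (s w)).

Definition consistent (d : seq bool -> player) (s : seq bool -> bool)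
    (i : player) (x : nat -> bool) : Prop :=
  forall k, d (bprefix x k) = i -> x k = s (bprefix x k).

Definition winning (g : game) (s : seq bool -> bool) (i : player) : Prop :=
  forall x, consistent g.1 s i x ->
    (if i is P1 then g.2 x else ~ g.2 x).

Definition Det (n : nat) : mvf (gameR n) profR :=
  @MVF (gameR n) profR (fun _ => True)
    (fun g s => winning g s P1 \/ winning g s P2).

Definition Win (n : nat) : mvf (gameR n) playerR :=
  @MVF (gameR n) playerR (fun _ => True)
    (fun g i => exists s, winning g s i).

From Pilot Require Import Defs.
From mathcomp Require Import all_boot zify.
From Stdlib Require Import Classical ClassicalEpsilon.
Set Implicit Arguments. Unset Strict Implicit. Unset Printing Implicit Defensive.

(* Natural numbers are played in unary, [k] as the word [1^k 0].  In the game for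
   [phi n p], player 1 plays the universally and player 2 the existentially quantified
   numbers; player 1 wins iff all [n] numbers are completed and the matrix fails, or
   player 2 stalls for ever inside one of his numbers.  This winning set is in D_n,
   witnessed by the open sets U_b (0 < b < n) of plays completing [n - b] numbers and
   U_0 of completed plays on which the matrix differs from the parity of [n], and its
   name is computable from [p].  Player 2 wins by playing witnesses iff [phi n p] holds
   and player 1 wins by playing counterexamples otherwise, so Win decides Sigma_n-LEM.
   For the parallelization of Sigma_n-LLPO, player 1 first announces an instance [i]
   as [1^i 0] and player 2 a side [c], after which the game for the [c]-th formula of
   instance [i] is played.  Player 1 cannot win, since player 2 may answer a true side;
   so Det returns a winning strategy of player 2, and its answers are correct sides. *)

(** * Partial recursive functions *)

Definition recursive (f : seq nat -> nat) := exists e, forall a, eval e a (f a).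

Definition recursiveb (c : seq nat -> bool) := recursive (fun a => nat_of_bool (c a)).

Lemma recursive_ext f g : recursive f -> f =1 g -> recursive g.
Proof. by move=> [e He] E; exists e => a; rewrite -E. Qed.

Lemma recursive_evals (fs : seq (seq nat -> nat)) : List.Forall recursive fs ->
  exists es, forall a, evals es a [seq f a | f <- fs].
Proof.
elim: fs => [|f fs IH] H; first by exists nil => a; constructor.
inversion H as [|? ? [e He] Hs]; subst.
have [es Hes] := IH Hs.
by exists (e :: es) => a /=; constructor.
Qed.

Lemma recursive_comp F fs : recursive F -> List.Forall recursive fs ->
  recursive (fun a => F [seq f a | f <- fs]).
Proof.
move=> [eF HF] /recursive_evals [es Hes]; exists (PComp eF es) => a.
by econstructor; [apply: Hes | apply: HF].
Qed.

Definition arg (i : nat) (a : seq nat) := nth 0 a i.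
Arguments arg : simpl never.

Lemma recursive_arg i : recursive (arg i).
Proof. by exists (PProj i) => a; constructor. Qed.

Lemma recursive_succ f : recursive f -> recursive (fun a => (f a).+1).
Proof.
move=> Hf; apply: recursive_ext (recursive_comp (F := fun a => (head 0 a).+1) (fs := [:: f]) _ _) _.
- by exists PSucc => a; constructor.
- by constructor.
- by [].
Qed.

Lemma recursive_const c : recursive (fun _ => c).
Proof.
elim: c => [|c IH]; last exact: recursive_succ.
by exists PZero => a; constructor.
Qed.

Fixpoint recur (S : nat -> nat -> nat -> nat -> nat) (k i y z : nat) : nat :=
  if k is t.+1 then S t (recur S t i y z) y z else i.

Definition recursive1 f := recursive (fun a => f (arg 0 a)).
Definition recursive2 f := recursive (fun a => f (arg 0 a) (arg 1 a)).
Definition recursive3 f := recursive (fun a => f (arg 0 a) (arg 1 a) (arg 2 a)).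
Definition recursive4 f := recursive (fun a => f (arg 0 a) (arg 1 a) (arg 2 a) (arg 3 a)).

Lemma recursive_app1 f g1 : recursive1 f -> recursive g1 -> recursive (fun a => f (g1 a)).
Proof.
by move=> Hf H1; apply: recursive_ext (recursive_comp (fs := [:: g1]) Hf _) _; repeat constructor.
Qed.

Lemma recursive_app2 f g1 g2 : recursive2 f -> recursive g1 -> recursive g2 ->
  recursive (fun a => f (g1 a) (g2 a)).
Proof.
by move=> Hf H1 H2; apply: recursive_ext (recursive_comp (fs := [:: g1; g2]) Hf _) _;
  repeat constructor.
Qed.

Lemma recursive_app3 f g1 g2 g3 : recursive3 f -> recursive g1 -> recursive g2 -> recursive g3 ->
  recursive (fun a => f (g1 a) (g2 a) (g3 a)).
Proof.
by move=> Hf H1 H2 H3; apply: recursive_ext (recursive_comp (fs := [:: g1; g2; g3]) Hf _) _;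
  repeat constructor.
Qed.

Lemma recursive_app4 f g1 g2 g3 g4 : recursive4 f ->
  recursive g1 -> recursive g2 -> recursive g3 -> recursive g4 ->
  recursive (fun a => f (g1 a) (g2 a) (g3 a) (g4 a)).
Proof.
by move=> Hf H1 H2 H3 H4; apply: recursive_ext (recursive_comp (fs := [:: g1; g2; g3; g4]) Hf _) _;
  repeat constructor.
Qed.

Lemma recursive_recur S K I Y Z : recursive4 S ->
  recursive K -> recursive I -> recursive Y -> recursive Z ->
  recursive (fun a => recur S (K a) (I a) (Y a) (Z a)).
Proof.
move=> [eS HS]; apply: (recursive_app4 (f := recur S)).
pose eG := PComp eS [:: PProj 0; PProj 1; PProj 3; PProj 4].
have Hrec k i y z : eval (PPrec (PProj 0) eG) [:: k; i; y; z] (recur S k i y z).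
  elim: k => [|k IH] /=; first by apply: ePrec0; constructor.
  apply: ePrecS; first exact: IH.
  apply: (@eComp _ _ _ [:: k; recur S k i y z; y; z]); last exact: HS.
  by repeat constructor.
exists (PComp (PPrec (PProj 0) eG) [:: PProj 0; PProj 1; PProj 2; PProj 3]) => a.
apply: (@eComp _ _ _ [:: arg 0 a; arg 1 a; arg 2 a; arg 3 a]); last exact: Hrec.
by repeat constructor.
Qed.

Ltac recursive_leaf := first [assumption | exact: recursive_arg | exact: recursive_const].

Lemma recursive_add f g : recursive f -> recursive g -> recursive (fun a => f a + g a).
Proof.
apply: recursive_app2.
apply: recursive_ext (@recursive_recur (fun _ r _ _ => r.+1) (arg 1) (arg 0)
  (fun _ => 0) (fun _ => 0) _ _ _ _ _) _; try recursive_leaf.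
  exact: recursive_succ (recursive_arg 1).
by move=> a; elim: (arg 1 a) => [|k IH] /=; lia.
Qed.

Lemma recursive_mul f g : recursive f -> recursive g -> recursive (fun a => f a * g a).
Proof.
apply: recursive_app2.
apply: recursive_ext (@recursive_recur (fun _ r y _ => r + y) (arg 1) (fun _ => 0) (arg 0)
  (fun _ => 0) _ _ _ _ _) _; try recursive_leaf.
  exact: recursive_add (recursive_arg 1) (recursive_arg 2).
by move=> a; elim: (arg 1 a) => [|k IH] /=; lia.
Qed.

Lemma recursive_pred f : recursive f -> recursive (fun a => (f a).-1).
Proof.
apply: recursive_app1.
apply: recursive_ext (@recursive_recur (fun t _ _ _ => t) (arg 0) (fun _ => 0) (fun _ => 0)
  (fun _ => 0) _ _ _ _ _) _; try recursive_leaf.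
by move=> a /=; case: (arg 0 a).
Qed.

Lemma recursive_sub f g : recursive f -> recursive g -> recursive (fun a => f a - g a).
Proof.
apply: recursive_app2.
apply: recursive_ext (@recursive_recur (fun _ r _ _ => r.-1) (arg 1) (arg 0)
  (fun _ => 0) (fun _ => 0) _ _ _ _ _) _; try recursive_leaf.
  exact: recursive_pred (recursive_arg 1).
by move=> a; elim: (arg 1 a) => [|k IH] /=; lia.
Qed.

Lemma recursive_ifz d f g : recursive d -> recursive f -> recursive g ->
  recursive (fun a => if d a is 0 then g a else f a).
Proof.
apply: (recursive_app3 (f := fun b x y => if b is 0 then y else x)).
apply: recursive_ext (@recursive_recur (fun _ _ y _ => y) (arg 0) (arg 2) (arg 1) (fun _ => 0)
  _ _ _ _ _) _; try recursive_leaf.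
by move=> a /=; case: (arg 0 a).
Qed.

Lemma recursive_if c f g : recursiveb c -> recursive f -> recursive g ->
  recursive (fun a => if c a then f a else g a).
Proof.
by move=> Hc Hf Hg; apply: recursive_ext (recursive_ifz Hc Hf Hg) _ => a; case: (c a).
Qed.

Lemma recursiveb_eq f g : recursive f -> recursive g -> recursiveb (fun a => f a == g a).
Proof.
move=> Hf Hg; have Hd := recursive_add (recursive_sub Hf Hg) (recursive_sub Hg Hf).
apply: recursive_ext (recursive_ifz Hd (recursive_const 0) (recursive_const 1)) _ => a.
by case E: (_ + _); case: eqP => //; lia.
Qed.

Lemma recursiveb_lt f g : recursive f -> recursive g -> recursiveb (fun a => f a < g a).
Proof.
move=> Hf Hg; apply: recursive_ext (recursive_ifz (recursive_sub Hg Hf) (recursive_const 1)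
  (recursive_const 0)) _ => a.
by case E: (_ - _); case: ltnP => //; lia.
Qed.

Lemma recursiveb_and c d : recursiveb c -> recursiveb d -> recursiveb (fun a => c a && d a).
Proof.
move=> Hc Hd; apply: recursive_ext (recursive_if Hc Hd (recursive_const 0)) _ => a.
by case: (c a).
Qed.

Lemma recursiveb_neg c : recursiveb c -> recursiveb (fun a => ~~ c a).
Proof.
move=> Hc; apply: recursive_ext (recursive_if Hc (recursive_const 0) (recursive_const 1)) _ => a.
by case: (c a).
Qed.

Lemma recursiveb_eqb c d : recursiveb c -> recursiveb d -> recursiveb (fun a => c a == d a).
Proof.
by move=> Hc Hd; apply: recursive_ext (recursiveb_eq Hc Hd) _ => a; case: (c a); case: (d a).
Qed.

Lemma recursiveb_odd f : recursive f -> recursiveb (fun a => odd (f a)).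
Proof.
apply: (recursive_app1 (f := fun t => nat_of_bool (odd t))).
apply: recursive_ext (@recursive_recur (fun _ r _ _ => 1 - r) (arg 0) (fun _ => 0) (fun _ => 0)
  (fun _ => 0) _ _ _ _ _) _; try recursive_leaf.
  exact: recursive_sub (recursive_const 1) (recursive_arg 1).
by move=> a /=; elim: (arg 0 a) => [|t IH] //=; rewrite IH; case: (odd t).
Qed.

Lemma recursive_half f : recursive f -> recursive (fun a => (f a)./2).
Proof.
apply: (recursive_app1 (f := half)).
apply: recursive_ext (@recursive_recur (fun t r _ _ => r + odd t) (arg 0) (fun _ => 0) (fun _ => 0)
  (fun _ => 0) _ _ _ _ _) _; try recursive_leaf.
  exact: recursive_add (recursive_arg 1) (recursiveb_odd (recursive_arg 0)).
move=> a; rewrite -divn2; elim: (arg 0 a) => [|t IH] //=; rewrite IH.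
by have := odd_double_half t; case: (odd t) => /= E; lia.
Qed.

Lemma recursive_double f : recursive f -> recursive (fun a => (f a).*2).
Proof. by move=> H; apply: recursive_ext (recursive_add H H) _ => a; lia. Qed.

Lemma recursive_pair f g : recursive f -> recursive g -> recursive (fun a => pair (f a) (g a)).
Proof.
move=> Hf Hg; have Hs := recursive_add Hf Hg.
apply: recursive_ext (recursive_add (recursive_half (recursive_mul Hs (recursive_succ Hs))) Hg) _.
by move=> a; rewrite /pair divn2.
Qed.

(** * Pairing and codes of finite sequences *)

Definition triangle s := s * s.+1 %/ 2.

Lemma triangleS s : triangle s.+1 = triangle s + s.+1.
Proof. rewrite /triangle; nia. Qed.

Lemma leq_triangle s t : s <= t -> triangle s <= triangle t.
Proof. by move=> H; apply/leq_div2r/leq_mul. Qed.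

(* [pair a b] lies on the diagonal [a + b = s], which is the unique [s] with
   [triangle s <= x <= triangle s + s]; [diagonal] finds it by counting. *)
Definition diagonal x :=
  recur (fun t r _ _ => if t - triangle r == r then r.+1 else r) x 0 0 0.

Lemma diagonal_bounds x : triangle (diagonal x) <= x <= triangle (diagonal x) + diagonal x.
Proof.
elim: x => [|x IH] //; rewrite /diagonal /= -/(diagonal x).
by case: ifP => /eqP E; rewrite ?triangleS; lia.
Qed.

Lemma diagonal_unique x s : triangle s <= x <= triangle s + s -> diagonal x = s.
Proof.
move=> H; have H' := diagonal_bounds x.
by case: (ltngtP (diagonal x) s) => // /leq_triangle; rewrite triangleS; lia.
Qed.

Definition unpair2 x := x - triangle (diagonal x).
Definition unpair1 x := diagonal x - unpair2 x.

Lemma diagonal_pair a b : diagonal (pair a b) = a + b.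
Proof. by apply: diagonal_unique; rewrite /pair -/(triangle (a + b)); lia. Qed.

Lemma unpair2_pair a b : unpair2 (pair a b) = b.
Proof. by rewrite /unpair2 diagonal_pair /pair -/(triangle (a + b)); lia. Qed.

Lemma unpair1_pair a b : unpair1 (pair a b) = a.
Proof. by rewrite /unpair1 unpair2_pair diagonal_pair; lia. Qed.

Lemma pair_unpair x : pair (unpair1 x) (unpair2 x) = x.
Proof.
have H := diagonal_bounds x; rewrite /pair /unpair1 /unpair2.
have -> : diagonal x - (x - triangle (diagonal x)) + (x - triangle (diagonal x)) = diagonal x.
  by lia.
by rewrite -/(triangle (diagonal x)); lia.
Qed.

Lemma unpair2_leq x : unpair2 x <= x.
Proof. by rewrite /unpair2; lia. Qed.

Lemma recursive_triangle f : recursive f -> recursive (fun a => triangle (f a)).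
Proof.
move=> H; apply: recursive_ext (recursive_half (recursive_mul H (recursive_succ H))) _.
by move=> a; rewrite /triangle divn2.
Qed.

Lemma recursive_diagonal f : recursive f -> recursive (fun a => diagonal (f a)).
Proof.
apply: recursive_app1; apply: recursive_recur; try recursive_leaf.
apply: recursive_if; last exact: recursive_arg.
  apply: recursiveb_eq (recursive_arg 1).
  exact: recursive_sub (recursive_arg 0) (recursive_triangle (recursive_arg 1)).
exact: recursive_succ (recursive_arg 1).
Qed.

Lemma recursive_unpair2 f : recursive f -> recursive (fun a => unpair2 (f a)).
Proof. by move=> H; apply: recursive_sub H (recursive_triangle (recursive_diagonal H)). Qed.

Lemma recursive_unpair1 f : recursive f -> recursive (fun a => unpair1 (f a)).
Proof. by move=> H; apply: recursive_sub (recursive_diagonal H) (recursive_unpair2 H). Qed.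

Definition code_drop t c := recur (fun _ r _ _ => unpair2 r.-1) t c 0 0.
Definition code_nth t c := unpair1 (code_drop t c).-1.
Definition code_lt_size t c := code_drop t c != 0.

Lemma recursive_code_drop f g : recursive f -> recursive g ->
  recursive (fun a => code_drop (f a) (g a)).
Proof.
move=> Hf Hg; apply: recursive_recur; try recursive_leaf.
exact: recursive_unpair2 (recursive_pred (recursive_arg 1)).
Qed.

Lemma recursive_code_nth f g : recursive f -> recursive g ->
  recursive (fun a => code_nth (f a) (g a)).
Proof. by move=> Hf Hg; apply/recursive_unpair1/recursive_pred/recursive_code_drop. Qed.

Lemma recursiveb_code_lt_size f g : recursive f -> recursive g ->
  recursiveb (fun a => code_lt_size (f a) (g a)).
Proof.
by move=> Hf Hg; apply/recursiveb_neg/recursiveb_eq/recursive_const/recursive_code_drop.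
Qed.

Lemma code_dropE t s : code_drop t (seqcode s) = seqcode (drop t s).
Proof.
elim: t s => [|t IH] s; first by rewrite drop0.
rewrite /code_drop /= -/(code_drop t (seqcode s)) IH.
have -> : drop t.+1 s = behead (drop t s) by rewrite -drop1 drop_drop add1n.
by case: (drop t s) => [|x s'] //=; rewrite unpair2_pair.
Qed.

Lemma size_leq_seqcode s : size s <= seqcode s.
Proof. by elim: s => [|x s IH] //=; rewrite /pair; lia. Qed.

Lemma code_lt_sizeE t s : code_lt_size t (seqcode s) = (t < size s).
Proof.
rewrite /code_lt_size code_dropE; case: ltnP => H; last by rewrite drop_oversize.
by case: (drop t s) (size_drop t s) => [|x s'] //=; lia.
Qed.

Lemma code_nthE t s : code_nth t (seqcode s) = nth 0 s t.
Proof.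
rewrite /code_nth code_dropE -[t in nth 0 s t]addn0 -nth_drop.
case: (ltnP t (size s)) => H; last by rewrite drop_oversize.
by case: (drop t s) (size_drop t s) => [|x s'] /=; [lia | rewrite unpair1_pair].
Qed.

Fixpoint decode_fuel (f c : nat) : seq nat :=
  if f is f'.+1 then
    (if c is c'.+1 then unpair1 c' :: decode_fuel f' (unpair2 c') else [::])
  else [::].

Definition decode c := decode_fuel c c.

Lemma decodeK : cancel decode seqcode.
Proof.
suff H f c : c <= f -> seqcode (decode_fuel f c) = c by move=> c; apply: H.
elim: f c => [|f IH] [|c] //= Hc.
by rewrite IH ?pair_unpair //; have := unpair2_leq c; lia.
Qed.

Lemma seqcodeK : cancel seqcode decode.
Proof.
suff H s f : size s <= f -> decode_fuel f (seqcode s) = s.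
  by move=> s; apply/H/size_leq_seqcode.
elim: s f => [|x s IH] [|f] //= Hf.
by rewrite unpair1_pair unpair2_pair IH.
Qed.

Lemma wcode_inj : injective wcode.
Proof. by move=> w1 w2 /(can_inj seqcodeK); apply: inj_map => -[] []. Qed.

Lemma recur_foldr S y z (g : nat -> nat) f base m :
  (forall t r, S t r y z = f (g (m.-1 - t)) r) ->
  recur S m base y z = foldr f base (mkseq g m).
Proof.
move=> HS.
suff H t : t <= m -> recur S t base y z = foldr f base (drop (m - t) (mkseq g m)).
  by rewrite H // subnn drop0.
elim: t => [|t IH] Ht /=; first by rewrite subn0 drop_oversize // size_mkseq.
rewrite IH ?(ltnW Ht) // HS [drop (m - t.+1) _](drop_nth 0) ?size_mkseq; last lia.
rewrite nth_mkseq /=; last lia.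
have -> : (m - t.+1).+1 = m - t by lia.
by have -> : m.-1 - t = m - t.+1 by lia.
Qed.

Definition code_count0 k u :=
  recur (fun t r y _ => r + (code_lt_size t y && (code_nth t y == 0))) k 0 u 0.

Lemma recursive_code_count0 f g : recursive f -> recursive g ->
  recursive (fun a => code_count0 (f a) (g a)).
Proof.
move=> Hf Hg; apply: recursive_recur; try recursive_leaf.
apply: recursive_add (recursive_arg 1) (recursiveb_and _ _).
  exact: recursiveb_code_lt_size (recursive_arg 0) (recursive_arg 2).
exact: recursiveb_eq (recursive_code_nth (recursive_arg 0) (recursive_arg 2)) (recursive_const 0).
Qed.

Lemma code_count0E k s : code_count0 k (seqcode s) = count_mem 0 (take k s).
Proof.
elim: k => [|t IH] /=; first by rewrite take0.
rewrite /code_count0 /= -/(code_count0 t _) IH code_lt_sizeE code_nthE.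
case: (ltnP t (size s)) => Ht; last by rewrite !take_oversize ?addn0 //; lia.
by rewrite (take_nth 0 Ht) -cats1 count_cat /= addn0 eq_sym.
Qed.

Definition code_size u := recur (fun t r y _ => r + code_lt_size t y) u 0 u 0.

Lemma recursive_code_size f : recursive f -> recursive (fun a => code_size (f a)).
Proof.
move=> Hf; apply: recursive_recur; try recursive_leaf.
apply: recursive_add (recursive_arg 1) _.
exact: recursiveb_code_lt_size (recursive_arg 0) (recursive_arg 2).
Qed.

Lemma code_sizeE s : code_size (seqcode s) = size s.
Proof.
suff H t : recur (fun t r y _ => r + code_lt_size t y) t 0 (seqcode s) 0 = minn t (size s).
  by rewrite /code_size H; have := size_leq_seqcode s; lia.
elim: t => [|t IH] /=; first by rewrite min0n.
by rewrite IH code_lt_sizeE; case: ltnP; lia.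
Qed.

Definition code_find0 u :=
  recur (fun t r y _ => if (r == t) && code_lt_size t y && (code_nth t y != 0) then t.+1 else r)
    u 0 u 0.

Lemma recursive_code_find0 f : recursive f -> recursive (fun a => code_find0 (f a)).
Proof.
move=> Hf; apply: recursive_recur; try recursive_leaf.
apply: recursive_if (recursive_succ (recursive_arg 0)) (recursive_arg 1).
have Hnth := recursive_code_nth (recursive_arg 0) (recursive_arg 2).
apply: recursiveb_and (recursiveb_neg (recursiveb_eq Hnth (recursive_const 0))).
apply: recursiveb_and (recursiveb_code_lt_size (recursive_arg 0) (recursive_arg 2)).
exact: recursiveb_eq (recursive_arg 1) (recursive_arg 0).
Qed.

Lemma code_find0E s : code_find0 (seqcode s) = find (pred1 0) s.
Proof.
suff H t : recur (fun t r y _ => if (r == t) && code_lt_size t y && (code_nth t y != 0)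
    then t.+1 else r) t 0 (seqcode s) 0 = find (pred1 0) (take t s).
  by rewrite /code_find0 H take_oversize // size_leq_seqcode.
elim: t => [|t IH] /=; first by rewrite take0.
rewrite IH code_lt_sizeE code_nthE.
case: (ltnP t (size s)) => Ht; last by rewrite !take_oversize ?andbF //; lia.
rewrite (take_nth 0 Ht) -cats1 find_cat /= andbT.
have Hs : size (take t s) = t by rewrite size_take Ht.
case: (boolP (has (pred1 0) (take t s))) => Hh.
  by move: (Hh); rewrite has_find Hs => /ltn_eqF ->.
by rewrite (hasNfind Hh) Hs eqxx /=; case: (nth 0 s t == 0); rewrite ?addn0 ?addn1.
Qed.

Definition slice o m (s : seq nat) := mkseq (fun t => nth 0 s (t + o)) m.

Lemma slice_cat s1 s2 : slice (size s1) (size s2) (s1 ++ s2) = s2.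
Proof.
rewrite /slice -[RHS](mkseq_nth 0); apply: eq_mkseq => t.
by rewrite nth_cat ltnNge leq_addl /= addnK.
Qed.

Definition code_tuple o m j :=
  recur (fun t r y z => pair (code_nth ((z.-1 - t) + o) y) r) m.-1 (code_nth (m.-1 + o) j) j m.-1.

Lemma recursive_code_tuple o f g : recursive f -> recursive g ->
  recursive (fun a => code_tuple o (f a) (g a)).
Proof.
move=> Hf Hg; apply: recursive_recur; try exact: recursive_pred Hf; try exact: Hg.
  apply: recursive_pair (recursive_arg 1).
  apply: recursive_code_nth (recursive_arg 2).
  exact: recursive_add (recursive_sub (recursive_pred (recursive_arg 3)) (recursive_arg 0))
    (recursive_const o).
exact: recursive_code_nth (recursive_add (recursive_pred Hf) (recursive_const o)) Hg.
Qed.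

Lemma tuple_rcons ks k : Defs.tuple (rcons ks k) = foldr pair k ks.
Proof. by elim: ks => [|a ks IH] //=; rewrite -IH; case: (rcons ks k) (size_rcons ks k). Qed.

Lemma code_tupleE o m s : 0 < m -> code_tuple o m (seqcode s) = Defs.tuple (slice o m s).
Proof.
case: m => // m _; rewrite /code_tuple /slice mkseqS tuple_rcons /= code_nthE.
by rewrite (@recur_foldr _ _ _ (fun t => nth 0 s (t + o)) pair) // => t r; rewrite code_nthE.
Qed.

(** * Plays in unary *)

Definition begins (x : nat -> bool) (w : seq bool) := bprefix x (size w) = w.

Lemma beginsP x w : begins x w <-> forall j, j < size w -> x j = nth false w j.
Proof.
split=> [E j Hj | H]; first by have := congr1 (nth false ^~ j) E; rewrite /bprefix nth_mkseq.
apply: (@eq_from_nth _ false); first by rewrite size_mkseq.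
by move=> j; rewrite size_mkseq => Hj; rewrite nth_mkseq // H.
Qed.

Lemma begins_cat x w v : begins x (w ++ v) -> begins x w.
Proof.
move=> /beginsP H; apply/beginsP => j Hj.
by rewrite H ?nth_cat ?Hj // size_cat; lia.
Qed.

Definition block k := rcons (nseq k true) false.

Lemma nth_block k r : nth false (block k) r = (r < k).
Proof.
rewrite nth_rcons size_nseq; case: (ltnP r k) => H; first by rewrite nth_nseq H.
by case: (r == k).
Qed.

Definition unary (ks : seq nat) : seq bool := flatten [seq block k | k <- ks].

Lemma unary_rcons ks k : unary (rcons ks k) = unary ks ++ block k.
Proof. by rewrite /unary map_rcons flatten_rcons. Qed.

Lemma unary_cat ks ks' : unary (ks ++ ks') = unary ks ++ unary ks'.
Proof. by rewrite /unary map_cat flatten_cat. Qed.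

Lemma count_unary ks r : count_mem false (unary ks ++ nseq r true) = size ks.
Proof.
elim: ks => [|k ks IH] /=; first by rewrite count_nseq mul0n.
rewrite /unary /= -catA count_cat -/(unary ks) IH /block -cats1 count_cat count_nseq /=; lia.
Qed.

Fixpoint parse_from (v : seq bool) (ks : seq nat) (cur : nat) : seq nat * nat :=
  match v with
  | [::] => (ks, cur)
  | true :: v' => parse_from v' ks cur.+1
  | false :: v' => parse_from v' (rcons ks cur) 0
  end.

Definition parse v := parse_from v [::] 0.

Lemma parse_from_nseq r v ks cur : parse_from (nseq r true ++ v) ks cur = parse_from v ks (cur + r).
Proof. by elim: r cur => [|r IH] cur /=; rewrite ?addn0 // IH addnS. Qed.

Lemma parse_unary ks r : parse (unary ks ++ nseq r true) = (ks, r).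
Proof.
suff H ks' v acc : parse_from (unary ks' ++ v) acc 0 = parse_from v (acc ++ ks') 0.
  by rewrite /parse H -[nseq r true]cats0 parse_from_nseq.
elim: ks' acc => [|k ks' IH] acc /=; first by rewrite cats0.
by rewrite /unary /= -/(unary ks') /block -catA -cats1 -catA parse_from_nseq /= IH add0n cat_rcons.
Qed.

Section Reaches.

Variables (h : seq bool) (x : nat -> bool).

Definition reaches ks := begins x (h ++ unary ks).

Lemma reaches_rcons ks k : reaches (rcons ks k) <->
  reaches ks /\ forall r, r <= k -> x (size (h ++ unary ks) + r) = (r < k).
Proof.
rewrite /reaches !beginsP unary_rcons catA; set W := h ++ unary ks.
split=> [H | [H1 H2] j].
  split=> [j Hj | r Hr].
    by rewrite H ?nth_cat ?Hj // size_cat; lia.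
  rewrite H; last by rewrite size_cat size_rcons size_nseq; lia.
  by rewrite nth_cat ltnNge leq_addr /= addKn nth_block.
rewrite size_cat size_rcons size_nseq nth_cat => Hj; case: ltnP => Hj2; first exact: H1.
have -> : j = size W + (j - size W) by lia.
by rewrite H2 ?addKn ?nth_block //; lia.
Qed.

Lemma reaches_rcons_inj ks k k' : reaches (rcons ks k) -> reaches (rcons ks k') -> k = k'.
Proof.
move=> /reaches_rcons [_ H1] /reaches_rcons [_ H2].
case: (ltngtP k k') => // L.
  by have := H2 k (ltnW L); rewrite H1 // ltnn L.
by have := H1 k' (ltnW L); rewrite H2 // ltnn L.
Qed.

Lemma reaches_cat ks ks' : reaches (ks ++ ks') -> reaches ks.
Proof. by rewrite /reaches unary_cat catA => /begins_cat. Qed.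

Lemma reaches_take m ks : reaches ks -> reaches (take m ks).
Proof. by rewrite -{1}(cat_take_drop m ks) => /reaches_cat. Qed.

Lemma reaches_inj ks ks' : size ks = size ks' -> reaches ks -> reaches ks' -> ks = ks'.
Proof.
elim/last_ind: ks ks' => [|ks k IH] ks'; first by case: ks'.
case/lastP: ks' => [|ks' k']; rewrite !size_rcons // => -[Hs] H H'.
have E : ks = ks'.
  by apply: IH Hs (@reaches_cat _ [:: k] _) (@reaches_cat _ [:: k'] _); rewrite cats1.
by subst ks'; rewrite (reaches_rcons_inj H H').
Qed.

Lemma reaches_longer ks ks' : reaches ks -> reaches ks' -> size ks < size ks' ->
  exists k, reaches (rcons ks k).
Proof.
move=> H H' L; exists (nth 0 ks' (size ks)).
have E : take (size ks) ks' = ks.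
  by apply: reaches_inj (reaches_take _ H') H; rewrite size_take L.
by rewrite -[X in rcons X _]E -take_nth //; apply: reaches_take.
Qed.

Lemma stalled_longest ks ks' : reaches ks -> (forall k, ~ reaches (rcons ks k)) ->
  reaches ks' -> size ks' <= size ks.
Proof.
move=> Hks Hst Hks'; rewrite leqNgt; apply/negP => L.
by have [k Hk] := reaches_longer Hks Hks' L; case: (Hst k).
Qed.

Lemma reaches_or_stalls m : reaches [::] ->
  (exists ks, size ks = m /\ reaches ks) \/
  (exists ks, size ks < m /\ reaches ks /\ forall k, ~ reaches (rcons ks k)).
Proof.
move=> H0; elim: m => [|m [[ks [Hs Hr]] | [ks [Hs Hst]]]]; first by left; exists [::].
  case: (classic (exists k, reaches (rcons ks k))) => [[k Hk] | Hno].
    by left; exists (rcons ks k); rewrite size_rcons Hs.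
  right; exists ks; rewrite Hs; split=> //; split=> // k Hk.
  by apply: Hno; exists k.
by right; exists ks; split; [lia | exact: Hst].
Qed.

End Reaches.

(** * Quantifier games *)

(* Player 1 chooses the numbers of even index (the universal quantifiers). *)
Definition owner m : player := if odd m then P2 else P1.

(* Keep writing [1] until the current block has length [wit ks]. *)
Definition witness_strategy (wit : seq nat -> nat) (v : seq bool) : bool :=
  let: (ks, r) := parse v in r < wit ks.

Definition block_turns n (d : seq bool -> player) h :=
  forall ks r, size ks < n -> d (h ++ unary ks ++ nseq r true) = owner (size ks).

Section WitnessPlay.

Variables (n : nat) (d : seq bool -> player) (h : seq bool) (wit : seq nat -> nat).
Variables (s : seq bool -> bool) (i : player) (x : nat -> bool).
Hypothesis turns : block_turns n d h.
Hypothesis s_wit : forall v, s (h ++ v) = witness_strategy wit v.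
Hypothesis x_cons : consistent d s i x.

Lemma reaches_witness ks : size ks < n -> owner (size ks) = i ->
  reaches h x ks -> reaches h x (rcons ks (wit ks)).
Proof.
move=> Hn Ho Hks; apply/reaches_rcons; split => //; set W := h ++ unary ks.
have Hsize r : size (W ++ nseq r true) = size W + r by rewrite size_cat size_nseq.
have Hnext r : begins x (W ++ nseq r true) -> x (size W + r) = (r < wit ks).
  move=> E; rewrite x_cons -Hsize E -catA ?turns //.
  by rewrite s_wit /witness_strategy parse_unary.
suff Hpre r : r <= wit ks -> begins x (W ++ nseq r true) by move=> r /Hpre /Hnext.
elim: r => [|r IH] Hr; first by rewrite cats0.
have E := IH (ltnW Hr).
rewrite /begins Hsize addnS /bprefix mkseqS -/(bprefix _ _) -Hsize E Hsize Hnext // Hr.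
by rewrite -cats1 -catA -addn1 nseqD.
Qed.

Lemma stall_owner ks : size ks < n -> reaches h x ks ->
  (forall k, ~ reaches h x (rcons ks k)) -> owner (size ks) <> i.
Proof. by move=> Hn Hks Hst Ho; apply: Hst _ (reaches_witness Hn Ho Hks). Qed.

Lemma reaches_invariant (G : seq nat -> Prop) : G [::] ->
  (forall ks, size ks < n -> owner (size ks) <> i -> G ks -> forall k, G (rcons ks k)) ->
  (forall ks, size ks < n -> owner (size ks) = i -> G ks -> G (rcons ks (wit ks))) ->
  forall ks, size ks <= n -> reaches h x ks -> G ks.
Proof.
move=> G0 Gother Gown; elim/last_ind => [|ks k IH] //; rewrite size_rcons => Hn Hks.
have [Hks' _] := (reaches_rcons h x ks k).1 Hks.
have Gks := IH (ltnW Hn) Hks'.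
case: (classic (owner (size ks) = i)) => Ho; last exact: Gother.
by rewrite (reaches_rcons_inj Hks (reaches_witness Hn Ho Hks')); apply: Gown.
Qed.

End WitnessPlay.

Lemma qalt_iff m u (P Q : seq nat -> Prop) : (forall l, P l <-> Q l) ->
  (qalt m u P <-> qalt m u Q).
Proof.
elim: m u P Q => [|m IH] u P Q H /=; first exact: H.
have Hk k b : qalt m b (fun l => P (k :: l)) <-> qalt m b (fun l => Q (k :: l)).
  by apply: IH => l; exact: H.
by case: u; [split=> A k; apply/Hk | split=> -[k A]; exists k; apply/Hk].
Qed.

(* The formula [P] with its first [size ks] quantifiers instantiated by [ks]. *)
Definition qholds n P ks :=
  qalt (n - size ks) (~~ odd (size ks)) (fun rest => P (ks ++ rest) = true).

Lemma qholds_step n P ks : size ks < n ->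
  (qholds n P ks <-> if odd (size ks) then exists k, qholds n P (rcons ks k)
                    else forall k, qholds n P (rcons ks k)).
Proof.
move=> Hn.
have Hk k : qalt (n - (size ks).+1) (odd (size ks)) (fun l => P (ks ++ k :: l))
    <-> qholds n P (rcons ks k).
  by rewrite /qholds size_rcons /= negbK; apply: qalt_iff => l; rewrite cat_rcons.
rewrite {1}/qholds (_ : n - size ks = (n - (size ks).+1).+1); last lia.
case: (odd (size ks)) Hk => /= Hk.
  by split=> -[k A]; exists k; apply/Hk.
by split=> A k; apply/Hk; exact: A.
Qed.

Lemma qholds_full n P ks : size ks = n -> (qholds n P ks <-> P ks).
Proof. by move=> Hn; rewrite /qholds Hn subnn /= cats0. Qed.

Definition choose_nat (Q : nat -> Prop) : nat := epsilon (inhabits 0) Q.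

Lemma choose_natP Q : (exists k, Q k) -> Q (choose_nat Q).
Proof. exact: epsilon_spec. Qed.

Definition exists_witness n P ks := choose_nat (fun k => qholds n P (rcons ks k)).

Definition forall_counterexample n P ks := choose_nat (fun k => ~ qholds n P (rcons ks k)).

(* Player 1 wins: all [n] numbers are played and [P] fails, or player 2 stalls. *)
Definition refuted n h P x :=
  (exists ks, size ks = n /\ reaches h x ks /\ P ks = false) \/
  (exists ks, size ks < n /\ odd (size ks) /\ reaches h x ks /\
     forall k, ~ reaches h x (rcons ks k)).

Section QuantifierPlay.

Variables (n : nat) (d : seq bool -> player) (h : seq bool) (P : seq nat -> bool).
Variables (s : seq bool -> bool) (x : nat -> bool).
Hypothesis turns : block_turns n d h.
Hypothesis x_start : reaches h x [::].

Lemma exists_witness_unrefuted :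
  (forall v, s (h ++ v) = witness_strategy (exists_witness n P) v) ->
  consistent d s P2 x -> qholds n P [::] -> ~ refuted n h P x.
Proof.
move=> Hs Hc Q0.
have HQ : forall ks, size ks <= n -> reaches h x ks -> qholds n P ks.
  apply: (reaches_invariant turns Hs Hc) => // ks Hn; rewrite /owner (qholds_step _ Hn).
    by case: odd.
  by case: odd => // _; apply: choose_natP.
move=> [[ks [Hn [Hks HP]]] | [ks [Hn [Ho [Hks Hst]]]]].
  by have := HQ ks (eq_leq Hn) Hks; rewrite qholds_full // HP.
by apply: (stall_owner turns Hs Hc Hn Hks Hst); rewrite /owner Ho.
Qed.

Lemma forall_counterexample_refutes :
  (forall v, s (h ++ v) = witness_strategy (forall_counterexample n P) v) ->
  consistent d s P1 x -> ~ qholds n P [::] -> refuted n h P x.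
Proof.
move=> Hs Hc Q0.
have HQ : forall ks, size ks <= n -> reaches h x ks -> ~ qholds n P ks.
  apply: (reaches_invariant (G := fun ks => ~ qholds n P ks) turns Hs Hc) => // ks Hn;
    rewrite /owner (qholds_step _ Hn).
    by case: odd => //= _ A k B; apply: A; exists k.
  case: odd => //= _ A; apply: (choose_natP (Q := fun k => ~ qholds n P (rcons ks k))).
  by apply: not_all_ex_not => B; apply: A.
case: (reaches_or_stalls n x_start) => [[ks [Hn Hks]] | [ks [Hn [Hks Hst]]]].
  left; exists ks; do 2!split => //.
  by have := HQ ks (eq_leq Hn) Hks; rewrite qholds_full //; case: (P ks).
right; exists ks; split => //; split; last by split.
by have := stall_owner turns Hs Hc Hn Hks Hst; rewrite /owner; case: odd.
Qed.

End QuantifierPlay.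

(** * The difference hierarchy *)

Lemma is_min_idx_inj n U (x : nat -> bool) b b' :
  is_min_idx n U x b -> is_min_idx n U x b' -> b = b'.
Proof.
move=> [Hb [HUb Hlt]] [Hb' [HUb' Hlt']].
case: (ltngtP b b') => // L.
  by case: (Hlt' b L); apply: HUb (leq_trans L Hb').
by case: (Hlt b' L); apply: HUb' (leq_trans L Hb).
Qed.

Lemma diff_setE n U x b : is_min_idx n U x b -> (diff_set n U x <-> odd b <> odd n).
Proof.
by move=> Hb; split=> [[b' [Hb' O]] | O]; [rewrite (is_min_idx_inj Hb Hb') | exists b].
Qed.

Section RefutedDiffSet.

Variables (n : nat) (h : seq bool) (P : seq nat -> bool) (x : nat -> bool).

Lemma refuted_complete ks : size ks = n -> reaches h x ks -> (refuted n h P x <-> P ks = false).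
Proof.
move=> Hs Hks; split=> [[[ks' [Hs' [Hks' HP]]] | [ks' [L [_ [Hks' Hst]]]]] | HP].
- by rewrite -(reaches_inj _ Hks' Hks) // Hs Hs'.
- by have := stalled_longest Hks' Hst Hks; lia.
by left; exists ks.
Qed.

Lemma refuted_stalled ks : size ks < n -> reaches h x ks ->
  (forall k, ~ reaches h x (rcons ks k)) -> (refuted n h P x <-> odd (size ks)).
Proof.
move=> Hs Hks Hst; have Hlong := stalled_longest Hks Hst.
split=> [[[ks' [Hs' [/Hlong]]] | [ks' [L [O [Hks' Hst']]]]] | O]; first lia.
  suff E : ks' = ks by rewrite -E.
  apply: (reaches_inj _ Hks' Hks); apply/eqP.
  by rewrite eqn_leq Hlong // (stalled_longest Hks' Hst' Hks).
by right; exists ks.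
Qed.

End RefutedDiffSet.

Section DiffSetRefuted.

Variables (n : nat) (U : nat -> (nat -> bool) -> Prop) (h : seq bool).
Variables (P : seq nat -> bool) (x : nat -> bool).
Hypothesis n_gt0 : 0 < n.
Hypothesis x_start : reaches h x [::].
Hypothesis U_pos : forall b, 0 < b < n ->
  (U b x <-> exists ks, size ks = n - b /\ reaches h x ks).
Hypothesis U_zero : U 0 x <-> exists ks, size ks = n /\ reaches h x ks /\ P ks != odd n.

Lemma min_idx_complete ks : size ks = n -> reaches h x ks ->
  is_min_idx n U x (if P ks != odd n then 0 else 1).
Proof.
move=> Hs Hks; case: ifP => HP; first by split=> //; split=> // _; apply/U_zero; exists ks.
split=> //; split=> [L | [|//] _ /U_zero [ks' [Hs' [Hks' HP']]]].
  apply/U_pos; first lia.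
  by exists (take (n - 1) ks); rewrite size_take Hs; split; [case: ltnP; lia | apply: reaches_take].
by move: HP'; rewrite (reaches_inj _ Hks' Hks) ?HP // Hs Hs'.
Qed.

Lemma min_idx_stalled ks : size ks < n -> reaches h x ks ->
  (forall k, ~ reaches h x (rcons ks k)) -> is_min_idx n U x (n - size ks).
Proof.
move=> Hs Hks Hst; have Hlong := stalled_longest Hks Hst.
split; first lia; split=> [L | [|c] L].
- by apply/U_pos; [lia | exists ks; split=> //; lia].
- by move=> /U_zero [ks' [Hs' [/Hlong]]]; lia.
- by move=> /U_pos [|ks' [Hs' /Hlong]]; lia.
Qed.

Lemma diff_set_refuted : diff_set n U x <-> refuted n h P x.
Proof.
case: (reaches_or_stalls n x_start) => [[ks [Hs Hks]] | [ks [Hs [Hks Hst]]]].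
  rewrite (diff_setE (min_idx_complete Hs Hks)) (refuted_complete _ Hs Hks).
  by case: (P ks); case: (odd n).
rewrite (diff_setE (min_idx_stalled Hs Hks Hst)) (refuted_stalled _ Hs Hks Hst).
by rewrite oddB ?(ltnW Hs) //; case: (odd n); case: (odd (size ks)).
Qed.

End DiffSetRefuted.

(** * Games with computable names *)

Fixpoint play_prefix (f : seq bool -> bool) (k : nat) : seq bool :=
  if k is k'.+1 then rcons (play_prefix f k') (f (play_prefix f k')) else [::].

Lemma bprefix_play f k : bprefix (fun j => f (play_prefix f j)) k = play_prefix f k.
Proof. by elim: k => [|k IH] //=; rewrite /bprefix mkseqS -/(bprefix _ _) IH. Qed.

Lemma consistent_profiles (d : seq bool -> player) s1 s2 :
  exists x, consistent d s1 P1 x /\ consistent d s2 P2 x.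
Proof.
pose f w := if d w is P1 then s1 w else s2 w.
by exists (fun j => f (play_prefix f j)); split=> k; rewrite bprefix_play /f => ->.
Qed.

Lemma open_ofE (e : baire) (c : nat -> bool) (W : nat -> seq bool) x :
  (forall j, e j = if c j then (wcode (W j)).+1 else 0) ->
  (open_of e x <-> exists j, c j /\ begins x (W j)).
Proof.
move=> He; split=> [[j [w [Ej Hw]]] | [j [Cj Hj]]]; last by exists j, (W j); rewrite He Cj.
by exists j; move: Ej; rewrite He; case: (c j) => // -[] /wcode_inj ->.
Qed.

Lemma computes_with_delay (e : prf) (F : seq nat -> nat) (p q : baire) (need : nat -> nat) :
  (forall a, eval e a (F a)) ->
  (forall N k, F [:: pair N (seqcode (Defs.prefix p k))] = if need N <= k then (q N).+1 else 0) ->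
  computes e p q.
Proof.
move=> He HF N; exists (need N); split.
  by have := He [:: pair N (seqcode (Defs.prefix p (need N)))]; rewrite HF leqnn.
by move=> j Hj; have := He [:: pair N (seqcode (Defs.prefix p j))]; rewrite HF leqNgt Hj.
Qed.

Lemma code_lt_size_prefix p k t : code_lt_size t (seqcode (Defs.prefix p k)) = (t < k).
Proof. by rewrite code_lt_sizeE size_mkseq. Qed.

Lemma code_nth_prefix p k t : t < k -> code_nth t (seqcode (Defs.prefix p k)) = p t.
Proof. by move=> H; rewrite code_nthE nth_mkseq. Qed.

Definition code_cons a c := (pair a c).+1.

Definition code_block k c := iter k (code_cons 1) (code_cons 0 c).

Lemma wcode_block k w : wcode (block k ++ w) = code_block k (wcode w).
Proof. by elim: k => [|k IH] //=; rewrite -IH. Qed.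

Lemma wcode_unary ks w : wcode (unary ks ++ w) = foldr code_block (wcode w) ks.
Proof. by elim: ks => [|k ks IH] //=; rewrite -catA wcode_block IH. Qed.

Lemma recursive_code_cons f g : recursive f -> recursive g ->
  recursive (fun a => code_cons (f a) (g a)).
Proof. by move=> Hf Hg; apply/recursive_succ/recursive_pair. Qed.

Lemma recursive_code_block f g : recursive f -> recursive g ->
  recursive (fun a => code_block (f a) (g a)).
Proof.
move=> Hf Hg.
apply: recursive_ext (@recursive_recur (fun _ r _ _ => code_cons 1 r) f
  (fun a => code_cons 0 (g a)) (fun _ => 0) (fun _ => 0) _ Hf _ _ _) _; try recursive_leaf.
- exact: recursive_code_cons (recursive_const 1) (recursive_arg 1).
- exact: recursive_code_cons (recursive_const 0) Hg.
by move=> a; rewrite /code_block; elim: (f a) => [|k IH] //=; rewrite IH.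
Qed.

Definition code_unary o m j :=
  recur (fun t r y z => code_block (code_nth ((z.-1 - t) + o) y) r) m 0 j m.

Lemma recursive_code_unary o f g : recursive f -> recursive g ->
  recursive (fun a => code_unary o (f a) (g a)).
Proof.
move=> Hf Hg; apply: recursive_recur; try recursive_leaf.
apply: recursive_code_block (recursive_arg 1).
apply: recursive_code_nth (recursive_arg 2).
exact: recursive_add (recursive_sub (recursive_pred (recursive_arg 3)) (recursive_arg 0))
  (recursive_const o).
Qed.

Lemma code_unaryE o m s : code_unary o m (seqcode s) = wcode (unary (slice o m s)).
Proof.
rewrite /code_unary (@recur_foldr _ _ _ (fun t => nth 0 s (t + o)) code_block).
  by rewrite -[unary _]cats0 wcode_unary.
by move=> t r; rewrite code_nthE.
Qed.

(* Both reductions build a game whose name is uniformly computable from the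
   input [p]: entry [j] of the name of [U_b] decodes [j] to a list [L], which
   determines a header [hd L] and the numbers [slice o _ L] played after it;
   [idx j] is the position of [p] deciding the matrix of the formula. *)
Section DiffName.

Variables (n o : nat) (hd : seq nat -> seq bool) (idx turn : nat -> nat).

Definition diff_entry (p : baire) b j :=
  let L := decode j in
  if b == 0 then
    (if (p (idx j) == 1) != odd n then (wcode (hd L ++ unary (slice o n L))).+1 else 0)
  else if b < n then (wcode (hd L ++ unary (slice o (n - b) L))).+1 else 0.

Definition diff_name (p : baire) N :=
  if odd N then diff_entry p (unpair1 N./2) (unpair2 N./2) else turn N./2.

Definition diff_game (d : seq bool -> player) p : game :=
  (d, diff_set n (fun b => open_of (fun j => diff_name p (pair b j).*2.+1))).

Lemma diff_name_odd p b j : diff_name p (pair b j).*2.+1 = diff_entry p b j.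
Proof. by rewrite /diff_name /= odd_double uphalf_double unpair1_pair unpair2_pair. Qed.

Lemma diff_game_names d p : (forall w, turn (wcode w) = player_code (d w)) ->
  @names (gameR n) (diff_name p) (diff_game d p).
Proof. by move=> Hturn; split=> // w; rewrite /diff_name odd_double doubleK. Qed.

Lemma diff_entry_hd p b j w : diff_entry p b j = (wcode w).+1 ->
  exists v, w = hd (decode j) ++ v.
Proof.
rewrite /diff_entry.
by case: eqP => _; [case: ifP | case: ifP] => // _ [/wcode_inj <-]; eexists.
Qed.

Section Refuted.

Variables (p : baire) (x : nat -> bool) (h : seq bool) (P : seq nat -> bool).
Hypothesis n_gt0 : 0 < n.
Hypothesis x_start : reaches h x [::].
Hypothesis hd_start : forall j, begins x (hd (decode j)) -> hd (decode j) = h.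
Hypothesis idx_matrix : forall j, hd (decode j) = h -> (p (idx j) == 1) = P (slice o n (decode j)).
Hypothesis hd_onto : forall ks, exists j, hd (decode j) = h /\ slice o (size ks) (decode j) = ks.

Lemma begins_entry m (c : nat -> bool) (Q : seq nat -> bool) :
  (forall j, hd (decode j) = h -> c j = Q (slice o m (decode j))) ->
  (exists j, c j /\ begins x (hd (decode j) ++ unary (slice o m (decode j)))) <->
  (exists ks, size ks = m /\ reaches h x ks /\ Q ks).
Proof.
move=> Hc; split=> [[j [Cj Hj]] | [ks [Hs [Hks Qks]]]].
  have Eh := hd_start (begins_cat Hj).
  by exists (slice o m (decode j)); rewrite size_mkseq -Hc // /reaches -Eh.
have [j [Eh Ej]] := hd_onto ks.
by exists j; rewrite Hc // Eh -Hs Ej.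
Qed.

Lemma diff_name_refuted :
  diff_set n (fun b => open_of (fun j => diff_name p (pair b j).*2.+1)) x <-> refuted n h P x.
Proof.
apply: diff_set_refuted => // [b Hb |].
  rewrite (open_ofE (c := predT)
    (W := fun j => hd (decode j) ++ unary (slice o (n - b) (decode j)))).
    rewrite (begins_entry (Q := predT)) //.
    by split=> [[ks [Hs [Hks _]]] | [ks [Hs Hks]]]; exists ks.
  by move=> j; rewrite diff_name_odd /diff_entry; case: b Hb => //= b ->.
rewrite (open_ofE (c := fun j => (p (idx j) == 1) != odd n)
  (W := fun j => hd (decode j) ++ unary (slice o n (decode j)))).
  by apply: begins_entry => j Eh; rewrite idx_matrix.
by move=> j; rewrite diff_name_odd.
Qed.

End Refuted.

Section Program.

Variable hdc : nat -> nat -> nat.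
Hypothesis hdcE : forall j w, hdc j (wcode w) = wcode (hd (decode j) ++ w).

(* Symbol [N] of the name: the answer is [0] while more input is needed, else
   the symbol plus one; only the matrix entry [p (idx j)] needs input. *)
Definition diff_prog (a : seq nat) : nat :=
  let N := unpair1 (arg 0 a) in let c := unpair2 (arg 0 a) in
  if odd N then
    let b := unpair1 N./2 in let j := unpair2 N./2 in
    if b == 0 then
      (if code_lt_size (idx j) c then
         (if (code_nth (idx j) c == 1) != odd n then (hdc j (code_unary o n j)).+2 else 1)
       else 0)
    else if b < n then (hdc j (code_unary o (n - b) j)).+2 else 1
  else (turn N./2).+1.

Definition diff_delay N := if odd N && (unpair1 N./2 == 0) then (idx (unpair2 N./2)).+1 else 0.

Lemma diff_progE p N k :
  diff_prog [:: pair N (seqcode (Defs.prefix p k))] =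
  if diff_delay N <= k then (diff_name p N).+1 else 0.
Proof.
rewrite /diff_prog /diff_delay /diff_name /diff_entry /arg /= unpair1_pair unpair2_pair.
case: (odd N) => //=; set j := unpair2 N./2.
have Ej m : code_unary o m j = wcode (unary (slice o m (decode j))).
  by rewrite -{1}(decodeK j) code_unaryE.
rewrite !Ej !hdcE code_lt_size_prefix.
case: eqP => _ //=; case: ltnP => // Hk.
by rewrite code_nth_prefix //; case: (_ != _).
Qed.

Hypotheses (turn_rec : recursive1 turn) (idx_rec : recursive1 idx) (hdc_rec : recursive2 hdc).

Lemma recursive_diff_prog : recursive diff_prog.
Proof.
have HN := recursive_unpair1 (recursive_arg 0); have Hc := recursive_unpair2 (recursive_arg 0).
have Hb := recursive_unpair1 (recursive_half HN); have Hj := recursive_unpair2 (recursive_half HN).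
have Hi := recursive_app1 idx_rec Hj.
have Hentry m : recursive m -> recursive (fun a => (hdc (unpair2 (unpair1 (arg 0 a))./2)
    (code_unary o (m a) (unpair2 (unpair1 (arg 0 a))./2))).+2).
  move=> Hm; apply/recursive_succ/recursive_succ.
  exact: recursive_app2 hdc_rec Hj (recursive_code_unary _ Hm Hj).
apply: recursive_if (recursiveb_odd HN) _ _; last first.
  exact: recursive_succ (recursive_app1 turn_rec (recursive_half HN)).
apply: recursive_if (recursiveb_eq Hb (recursive_const 0)) _ _; last first.
  apply: recursive_if (recursiveb_lt Hb (recursive_const n)) _ (recursive_const 1).
  exact: Hentry _ (recursive_sub (recursive_const n) Hb).
apply: recursive_if (recursiveb_code_lt_size Hi Hc) _ (recursive_const 0).
apply: recursive_if _ (Hentry _ (recursive_const n)) (recursive_const 1).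
apply/recursiveb_neg/recursiveb_eqb; last exact: recursiveb_odd (recursive_const n).
exact: recursiveb_eq (recursive_code_nth Hi Hc) (recursive_const 1).
Qed.

Lemma computes_diff_name : exists e, forall p, computes e p (diff_name p).
Proof.
have [e He] := recursive_diff_prog.
by exists e => p; apply: (computes_with_delay (need := diff_delay) He) => N k; rewrite diff_progE.
Qed.

End Program.
End DiffName.

(** * Sigma_n-LEM *)

Definition block_owner n z : player := if z < n then owner z else P1.

Lemma recursive_block_owner n f : recursive f ->
  recursive (fun a => player_code (block_owner n (f a))).
Proof.
move=> Hf; apply: recursive_ext (recursive_if (recursiveb_lt Hf (recursive_const n))
  (recursive_if (recursiveb_odd Hf) (recursive_const 2) (recursive_const 1)) (recursive_const 1)) _.
by move=> a; rewrite /block_owner /owner; case: (_ < n); case: odd.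
Qed.

Lemma size_leq_wcode w : size w <= wcode w.
Proof. by rewrite -(size_map nat_of_bool) size_leq_seqcode. Qed.

Lemma code_count0_wcode k w : code_count0 k (wcode w) = count_mem false (take k w).
Proof. by rewrite code_count0E -map_take count_map; apply: eq_count => -[]. Qed.

Lemma code_count0_wcode_all w : code_count0 (wcode w) (wcode w) = count_mem false w.
Proof. by rewrite code_count0_wcode take_oversize // size_leq_wcode. Qed.

Definition matrix_of (p : baire) ks := p (Defs.tuple ks) == 1.

Lemma phi_qholds n (p : baire) x : (forall i, p i = nat_of_bool (x i)) ->
  (phi n x <-> qholds n (matrix_of p) [::]).
Proof.
by move=> Hp; rewrite /qholds /phi subn0; apply: qalt_iff => l; rewrite /matrix_of Hp; case: (x _).
Qed.

Section LEM.

Variable n : nat.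
Hypothesis n_gt0 : 0 < n.

Definition lem_turn (w : seq bool) := block_owner n (count_mem false w).

Definition lem_turn_code u := player_code (block_owner n (code_count0 u u)).

Definition lem_game := diff_game n 0 (fun _ => [::]) (code_tuple 0 n) lem_turn_code lem_turn.
Definition lem_name := diff_name n 0 (fun _ => [::]) (code_tuple 0 n) lem_turn_code.

Lemma lem_game_names p : @names (gameR n) (lem_name p) (lem_game p).
Proof.
by apply: diff_game_names => w; rewrite /lem_turn_code code_count0_wcode_all.
Qed.

Lemma lem_turns : block_turns n lem_turn [::].
Proof. by move=> ks r Hn; rewrite /lem_turn /block_owner /= count_unary Hn. Qed.

Lemma lem_refuted p x : (lem_game p).2 x <-> refuted n [::] (matrix_of p) x.
Proof.
apply: diff_name_refuted => // [j _ | ks].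
  by rewrite /matrix_of -{1}(decodeK j) code_tupleE.
by exists (seqcode ks); rewrite seqcodeK (slice_cat [::]).
Qed.

Lemma lem_winner p s i : winning (lem_game p) s i ->
  (i = P2 <-> qholds n (matrix_of p) [::]).
Proof.
case: i => Hwin; split=> // Q.
- pose t := witness_strategy (exists_witness n (matrix_of p)).
  have [y [Hy1 Hy2]] := consistent_profiles lem_turn s t.
  have Ht v : t ([::] ++ v) = witness_strategy (exists_witness n (matrix_of p)) v by [].
  by case: (exists_witness_unrefuted lem_turns Ht Hy2 Q); apply/lem_refuted/Hwin.
- apply: NNPP => NQ.
  pose t := witness_strategy (forall_counterexample n (matrix_of p)).
  have [y [Hy1 Hy2]] := consistent_profiles lem_turn t s.
  apply: (Hwin y Hy2); apply/lem_refuted.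
  have Ht v : t ([::] ++ v) = witness_strategy (forall_counterexample n (matrix_of p)) v by [].
  exact: forall_counterexample_refutes lem_turns _ Ht Hy1 NQ.
Qed.

End LEM.

(* Reads symbol [0] of the answer of [Win], at position [1] of the paired input. *)
Definition lem_answer (a : seq nat) : nat :=
  let c := unpair2 (arg 0 a) in if code_lt_size 1 c then (code_nth 1 c == 2).+1 else 0.

Lemma recursive_lem_answer : recursive lem_answer.
Proof.
have Hc := recursive_unpair2 (recursive_arg 0).
apply: recursive_if (recursiveb_code_lt_size (recursive_const 1) Hc) _ (recursive_const 0).
apply: recursive_succ.
exact: recursiveb_eq (recursive_code_nth (recursive_const 1) Hc) (recursive_const 2).
Qed.

Lemma computes_lem_name n : exists e, forall p, computes e p (lem_name n p).
Proof.
apply: (@computes_diff_name n 0 (fun _ => [::]) _ _ (fun _ w => w)) => //.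
- exact: recursive_block_owner (recursive_code_count0 (recursive_arg 0) (recursive_arg 0)).
- exact: recursive_code_tuple (recursive_const n) (recursive_arg 0).
- exact: recursive_arg 1.
Qed.

Lemma lem_reduction n : 0 < n -> Wred (SigmaLEM n) (Win n).
Proof.
move=> n_gt0; have [eH HeH] := computes_lem_name n; have [eK HeK] := recursive_lem_answer.
exists eK, eH => G HG p x Hpx _; exists (lem_name n p); split=> //.
split; first by exists (lem_game n p) => //; exact: lem_game_names.
have [i /= Hi [s Hwin]] := HG _ _ (lem_game_names n p) I.
exists (fun _ => nat_of_bool (G (lem_name n p) 0 == 2)); split.
  apply: (computes_with_delay (need := fun _ => 2) HeK) => N k.
  rewrite /lem_answer /arg /= unpair2_pair code_lt_size_prefix.
  by case: ltnP => Hk //; rewrite code_nth_prefix.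
exists (G (lem_name n p) 0 == 2) => //=.
by rewrite (phi_qholds n Hpx) -(lem_winner n_gt0 Hwin) Hi; case: i {Hi Hwin}.
Qed.

(** * Parallelized Sigma_n-LLPO *)

(* Player 1 picks the instance [i] by playing [block i], player 2 the side [c]. *)
Definition header i (c : bool) := block i ++ [:: c].

Lemma find_block i v : find negb (block i ++ v) = i.
Proof. by rewrite /block -cats1 -catA; elim: i => [|i IH] //=; rewrite IH. Qed.

Lemma find_header i c v : find negb (header i c ++ v) = i.
Proof. by rewrite /header -catA find_block. Qed.

Lemma size_header i c : size (header i c) = i.+2.
Proof. by rewrite size_cat size_rcons size_nseq addn1. Qed.

Lemma drop_header i c v : drop i.+2 (header i c ++ v) = v.
Proof. by rewrite drop_cat size_header ltnn subnn drop0. Qed.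

Lemma reaches_header i c x : reaches (header i c) x [::] <->
  (forall j, j < i -> x j) /\ x i = false /\ x i.+1 = c.
Proof.
rewrite /reaches cats0 beginsP size_header /header /block -cats1 -catA /=.
split=> [H | [H1 [H2 H3]] j Hj].
  split=> [j Hj | ]; first by rewrite H ?nth_cat ?size_nseq ?Hj ?nth_nseq ?Hj //; lia.
  by rewrite !H ?nth_cat ?size_nseq ?ltnn ?subnn //= ltnNge leqnSn subSnn.
rewrite nth_cat size_nseq; case: ltnP => L; first by rewrite nth_nseq L H1.
have /orP [/eqP -> | /eqP ->] : (j == i) || (j == i.+1) by lia.
  by rewrite subnn.
by rewrite subSnn.
Qed.

Lemma header_eq i c i' c' : header i c = header i' c' -> i = i' /\ c = c'.
Proof.
move=> E; split; last by have := congr1 (last false) E; rewrite /header !last_cat.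
by have := congr1 (find negb) E; rewrite -[header i c]cats0 -[header i' c']cats0 !find_header.
Qed.

Lemma reaches_header_inj i c i' c' x : reaches (header i c) x [::] ->
  reaches (header i' c') x [::] -> header i c = header i' c'.
Proof.
move=> /reaches_header [A1 [A2 A3]] /reaches_header [B1 [B2 B3]].
have E : i = i'.
  by case: (ltngtP i i') => // L; [have := B1 i L; rewrite A2 | have := A1 i' L; rewrite B2].
by rewrite -E -A3 -B3 E.
Qed.

Lemma header_or_all_ones (x : nat -> bool) :
  (forall j, x j) \/ exists i c, reaches (header i c) x [::].
Proof.
case: (classic (exists j, ~~ x j)) => [H | H]; last first.
  by left=> j; apply: negbNE; apply/negP => Hj; apply: H; exists j.
right; case: (ex_minnP H) => i Hi Hmin; exists i, (x i.+1); apply/reaches_header.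
split; last by split=> //; apply/negbTE.
by move=> j Hj; apply: negbNE; apply/negP => /Hmin; lia.
Qed.

Section LLPO.

Variable n : nat.
Hypothesis n_gt0 : 0 < n.

Definition llpo_turn (w : seq bool) : player :=
  let i := find negb w in
  if i == size w then P1 else if size w == i.+1 then P2 else lem_turn n (drop i.+2 w).

Lemma llpo_turn_header i c v : llpo_turn (header i c ++ v) = lem_turn n v.
Proof.
rewrite /llpo_turn find_header drop_header size_cat size_header.
by rewrite !ifF //; apply/eqP; lia.
Qed.

Lemma llpo_turns i c : block_turns n llpo_turn (header i c).
Proof. by move=> ks r Hn; rewrite llpo_turn_header lem_turns. Qed.

Definition llpo_turn_code u :=
  let i := code_find0 u in let m := code_size u in
  if i == m then 1 else if m == i.+1 then 2
  else player_code (block_owner n (code_count0 u u - code_count0 i.+2 u)).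

Lemma llpo_turn_codeE w : llpo_turn_code (wcode w) = player_code (llpo_turn w).
Proof.
rewrite /llpo_turn_code /llpo_turn /wcode code_find0E code_sizeE find_map size_map.
rewrite (eq_find (a2 := negb)); last by case.
rewrite -!/(wcode w) code_count0_wcode_all code_count0_wcode.
case: eqP => // _; case: eqP => // _.
by rewrite /lem_turn -{1}(cat_take_drop (find negb w).+2 w) count_cat addKn.
Qed.

Definition llpo_hd (L : seq nat) := header (nth 0 L 0) (nth 0 L 1 != 0).

Definition llpo_idx j := pair (code_nth 0 j) ((code_tuple 2 n j).*2 + (code_nth 1 j != 0)).

Definition llpo_game := diff_game n 2 llpo_hd llpo_idx llpo_turn_code llpo_turn.
Definition llpo_name := diff_name n 2 llpo_hd llpo_idx llpo_turn_code.

Lemma llpo_game_names p : @names (gameR n) (llpo_name p) (llpo_game p).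
Proof. exact/diff_game_names/llpo_turn_codeE. Qed.

Definition instance_matrix (p : baire) i (c : bool) := matrix_of (fun m => p (pair i (m.*2 + c))).

Lemma llpo_refuted p x i c : reaches (header i c) x [::] ->
  ((llpo_game p).2 x <-> refuted n (header i c) (instance_matrix p i c) x).
Proof.
move=> Hx; apply: diff_name_refuted => // [j Hj | j Ej | ks].
- by apply: reaches_header_inj Hx; rewrite /reaches cats0.
- have [Ei Ec] := header_eq Ej; rewrite /instance_matrix /matrix_of /llpo_idx; set L := decode j.
  by rewrite -[j](decodeK j) code_tupleE // !code_nthE -/L Ei Ec.
exists (seqcode [:: i, nat_of_bool c & ks]); rewrite seqcodeK /llpo_hd /=.
by rewrite (slice_cat [:: i; nat_of_bool c]); case: (c).
Qed.

Lemma all_ones_losing p (x : nat -> bool) : (forall j, x j) -> ~ (llpo_game p).2 x.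
Proof.
move=> Hx; rewrite /= (diff_setE (b := n)) //; split=> //; split=> [|b _ [j [w [Ej Hw]]]].
  by rewrite ltnn.
move: Ej; rewrite diff_name_odd => /diff_entry_hd [v Ew]; rewrite {}Ew in Hw.
have /reaches_header [_ [Hi _]] : reaches (llpo_hd (decode j)) x [::].
  by rewrite /reaches cats0; apply: begins_cat Hw.
by rewrite Hx in Hi.
Qed.

Lemma llpo_turn_block i : llpo_turn (block i) = P2.
Proof.
rewrite /llpo_turn -[block i]cats0 find_block size_cat size_rcons size_nseq addn0.
by rewrite ifF ?eqxx //; apply/eqP; lia.
Qed.

Lemma llpo_turn_ones j : llpo_turn (nseq j true) = P1.
Proof. by rewrite /llpo_turn size_nseq find_nseq /= mul1n eqxx. Qed.

Lemma consistent_header i y s : begins y (block i) -> consistent llpo_turn s P2 y ->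
  reaches (header i (s (block i))) y [::].
Proof.
move=> Hb Hy; have Hi : bprefix y i.+1 = block i by rewrite -Hb /block size_rcons size_nseq.
rewrite /reaches cats0 /begins size_header /bprefix mkseqS -/(bprefix y i.+1) Hi.
by rewrite Hy Hi ?llpo_turn_block // -cats1.
Qed.

Lemma consistent_block i y u : (forall j, j <= i -> u (nseq j true) = (j < i)) ->
  consistent llpo_turn u P1 y -> begins y (block i).
Proof.
move=> Hu Hy.
have Hones j : j <= i -> bprefix y j = nseq j true.
  elim: j => [|j IH] Hj //; rewrite /bprefix mkseqS -/(bprefix y j) IH ?(ltnW Hj) //.
  by rewrite Hy IH ?llpo_turn_ones ?(ltnW Hj) // Hu ?(ltnW Hj) // Hj -cats1 -addn1 nseqD.
rewrite /begins /block size_rcons size_nseq /bprefix mkseqS -/(bprefix y i) Hones //.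
by rewrite Hy Hones ?llpo_turn_ones // Hu // ltnn.
Qed.

Definition answer_strategy (cc : nat -> bool) (wit : nat -> seq nat -> nat) w :=
  let i := find negb w in
  if size w == i.+1 then cc i else witness_strategy (wit i) (drop i.+2 w).

Lemma answer_strategy_header cc wit i c v :
  answer_strategy cc wit (header i c ++ v) = witness_strategy (wit i) v.
Proof.
by rewrite /answer_strategy find_header drop_header size_cat size_header ifF //; apply/eqP; lia.
Qed.

Lemma answer_strategy_block cc wit i : answer_strategy cc wit (block i) = cc i.
Proof.
by rewrite /answer_strategy -[block i]cats0 find_block cats0 size_rcons size_nseq eqxx.
Qed.

Definition announce_strategy i (wit : seq nat -> nat) w :=
  let j := find negb w in
  if j == size w then size w < i else witness_strategy wit (drop j.+2 w).

Lemma announce_strategy_header i wit c v :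
  announce_strategy i wit (header i c ++ v) = witness_strategy wit v.
Proof.
by rewrite /announce_strategy find_header drop_header size_cat size_header ifF //; apply/eqP; lia.
Qed.

Lemma announce_strategy_ones i wit j : announce_strategy i wit (nseq j true) = (j < i).
Proof. by rewrite /announce_strategy size_nseq find_nseq /= mul1n eqxx. Qed.

Lemma llpo_P1_loses p s : (forall i, exists c, qholds n (instance_matrix p i c) [::]) ->
  ~ winning (llpo_game p) s P1.
Proof.
move=> Hdom W1.
pose cc i := epsilon (inhabits false) (fun c => qholds n (instance_matrix p i c) [::]).
pose wit i := exists_witness n (instance_matrix p i (cc i)).
have [y [Hy1 Hy2]] := consistent_profiles llpo_turn s (answer_strategy cc wit).
have Wy := W1 y Hy1.
case: (header_or_all_ones y) => [Hall | [i [c Hy]]]; first exact: all_ones_losing Hall Wy.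
have Hc : c = cc i.
  have Hb : begins y (block i) by move: Hy; rewrite /reaches cats0 => /begins_cat.
  have := reaches_header_inj Hy (consistent_header Hb Hy2).
  by rewrite answer_strategy_block => /header_eq [].
subst c; apply: (exists_witness_unrefuted (llpo_turns i (cc i)) _ Hy2).
- exact: answer_strategy_header.
- exact: epsilon_spec (Hdom i).
exact/(llpo_refuted _ Hy).
Qed.

Lemma llpo_P2_correct p s : winning (llpo_game p) s P2 ->
  forall i, qholds n (instance_matrix p i (s (block i))) [::].
Proof.
move=> W2 i; apply: NNPP => NQ; set c := s (block i).
pose u := announce_strategy i (forall_counterexample n (instance_matrix p i c)).
have [y [Hy1 Hy2]] := consistent_profiles llpo_turn u s.
have Hy : reaches (header i c) y [::].
  apply: consistent_header Hy2; apply: consistent_block Hy1 => j _.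
  exact: announce_strategy_ones.
apply: (W2 y Hy2); apply/(llpo_refuted _ Hy).
apply: forall_counterexample_refutes (llpo_turns i c) Hy _ Hy1 NQ => v.
exact: announce_strategy_header.
Qed.

End LLPO.

Lemma computes_llpo_name n : exists e, forall p, computes e p (llpo_name n p).
Proof.
have Hside : recursiveb (fun a => code_nth 1 (arg 0 a) != 0).
  exact: recursiveb_neg (recursiveb_eq (recursive_code_nth (recursive_const 1) (recursive_arg 0))
    (recursive_const 0)).
apply: (@computes_diff_name n 2 llpo_hd _ _
  (fun j w => code_block (code_nth 0 j) (code_cons (code_nth 1 j != 0) w))).
- move=> j w; set L := decode j.
  by rewrite -[j](decodeK j) !code_nthE /llpo_hd /header -catA wcode_block.
- have Hu := recursive_arg 0; have Hi := recursive_code_find0 Hu; have Hm := recursive_code_size Hu.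
  apply: recursive_if (recursiveb_eq Hi Hm) (recursive_const 1) _.
  apply: recursive_if (recursiveb_eq Hm (recursive_succ Hi)) (recursive_const 2) _.
  apply/recursive_block_owner/recursive_sub; first exact: recursive_code_count0.
  exact: recursive_code_count0 (recursive_succ (recursive_succ Hi)) Hu.
- apply: recursive_pair (recursive_code_nth (recursive_const 0) (recursive_arg 0)) _.
  apply: recursive_add Hside.
  exact: recursive_double (recursive_code_tuple _ (recursive_const n) (recursive_arg 0)).
apply: recursive_code_block (recursive_code_nth (recursive_const 0) (recursive_arg 0)) _.
exact: recursive_code_cons Hside (recursive_arg 1).
Qed.

(* Symbol [N] of the output: the bit chosen by player 2 after [block (unpair1 N)],
   read at position [(wcode (block i)).*2.+1] of the paired input. *)
Definition llpo_answer (a : seq nat) : nat :=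
  let c := unpair2 (arg 0 a) in let t := (code_block (unpair1 (unpair1 (arg 0 a))) 0).*2.+1 in
  if code_lt_size t c then (code_nth t c).+1 else 0.

Lemma recursive_llpo_answer : recursive llpo_answer.
Proof.
have Hc := recursive_unpair2 (recursive_arg 0).
have Ht := recursive_succ (recursive_double (recursive_code_block
  (recursive_unpair1 (recursive_unpair1 (recursive_arg 0))) (recursive_const 0))).
exact: recursive_if (recursiveb_code_lt_size Ht Hc) (recursive_succ (recursive_code_nth Ht Hc))
  (recursive_const 0).
Qed.

Lemma phi_instance n (p : baire) (xs : nat -> (nat -> bool) * (nat -> bool)) i c :
  @names (seqR (prodR cantorR cantorR)) p xs ->
  (phi n (if c then (xs i).2 else (xs i).1) <-> qholds n (instance_matrix p i c) [::]).
Proof.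
move=> /(_ i) [H1 H2]; apply: phi_qholds => m.
by case: c; rewrite ?addn1 ?addn0; [exact: H2 | exact: H1].
Qed.

Lemma llpo_reduction n : 0 < n -> Wred (hat (SigmaLLPO n)) (Det n).
Proof.
move=> n_gt0; have [eH HeH] := computes_llpo_name n; have [eK HeK] := recursive_llpo_answer.
exists eK, eH => G HG p xs Hp Hdom; exists (llpo_name n p); split=> //.
split; first by exists (llpo_game n p) => //; exact: llpo_game_names.
have [s /= Hs Hwin] := HG _ _ (llpo_game_names n p) I.
have W2 : winning (llpo_game n p) s P2.
  case: Hwin => // W1; case: (llpo_P1_loses n_gt0 _ W1) => i.
  case: (Hdom i) => [/(phi_instance n i false Hp) | /(phi_instance n i true Hp)] H.
    by exists false.
  by exists true.
exists (fun N => G (llpo_name n p) (wcode (block (unpair1 N)))); split.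
  apply: (computes_with_delay (need := fun N => (wcode (block (unpair1 N))).*2.+2) HeK) => N k.
  rewrite /llpo_answer /arg /= unpair1_pair unpair2_pair code_lt_size_prefix.
  rewrite -[code_block _ 0]/(code_block _ (wcode [::])) -wcode_block cats0.
  case: ltnP => Hk //; rewrite code_nth_prefix // /pairB /= odd_double.
  by rewrite uphalf_double.
exists (fun i => s (block i)) => [i | i /=]; first by rewrite /= unpair1_pair; apply: Hs.
exact/(phi_instance n i _ Hp)/llpo_P2_correct.
Qed.

Unset Implicit Arguments.

Theorem lemma14 (n : nat) (hn : 1 <= n) :
  Wred (hat (SigmaLLPO n)) (Det n) /\ Wred (SigmaLEM n) (Win n).
Proof. by split; [apply: llpo_reduction | apply: lem_reduction]. Qed.
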